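(* Let $C,D$ be cones together with a non-singular bilinear map $\langle\cdot,\cdot\rangle\colon C\times D\to\overline{\mathbb{R}}_+$, and equip $D$ with the weak upper topology $w(D,C)$. Then every sublinear functional $\psi\colon D\to\overline{\mathbb{R}}_+$ which is lower semicontinuous with respect to $w(D,C)$ is the pointwise supremum of the functionals $\widehat x$ lying below it: for every $y\in D$, \[\psi(y)=\sup\{\langle x,y\rangle\mid x\in C,\ \langle x,z\rangle\le\psi(z)\text{ for all }z\in D\}.\]
   Context: $\overline{\mathbb{R}}_+=[0,+\infty)\cup\{+\infty\}$ with extended arithmetic ($r+\infty=+\infty$, $r\cdot\infty=\infty$ for $r>0$, $0\cdot\infty=0$), equipped with the upper topology, whose open sets are $\emptyset$, $\overline{\mathbb{R}}_+$ and the intervals $]r,+\infty]$, $r\in[0,\infty)$; lower semicontinuous means continuous for this topology. A cone is a commutative monoid with a scalar multiplication by $[0,\infty)$ satisfying $r(x+y)=rx+ry$, $(r+s)x=rx+sx$, $(rs)x=r(sx)$, $1x=x$, $0x=0$. A functional $\psi\colon D\to\overline{\mathbb{R}}_+$ is sublinear if $\psi(ry)=r\psi(y)$ for all $r\in[0,\infty)$ and $\psi(y+z)\le\psi(y)+\psi(z)$. A bilinear map is one additive and homogeneous in each argument separately; it is non-singular if for $y\ne y'$ in $D$ there is $x\in C$ with $\langle x,y\rangle\ne\langle x,y'\rangle$. For $x\in C$, $\widehat x(y)=\langle x,y\rangle$. The weak upper topology $w(D,C)$ is the coarsest topology on $D$ making all $\widehat x$, $x\in C$, lower semicontinuous. The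 supremum of the empty set is $0$. *)

From Stdlib Require Import Reals.
Open Scope R_scope.

Definition NNR := {r : R | 0 <= r}.
Definition nnval (r : NNR) : R := proj1_sig r.
Definition nn0 : NNR := exist _ 0 (Rle_refl 0).
Definition nn1 : NNR := exist _ 1 Rle_0_1.
Definition nnadd (r s : NNR) : NNR :=
  exist _ (nnval r + nnval s) (Rplus_le_le_0_compat _ _ (proj2_sig r) (proj2_sig s)).
Definition nnmul (r s : NNR) : NNR :=
  exist _ (nnval r * nnval s) (Rmult_le_pos _ _ (proj2_sig r) (proj2_sig s)).

Inductive ERp : Type := Fin (r : NNR) | Inf.

Definition eadd (a b : ERp) : ERp :=
  match a, b with Fin r, Fin s => Fin (nnadd r s) | _, _ => Inf end.

(** r * a with the convention 0 * oo = 0. *)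
Definition escale (r : NNR) (a : ERp) : ERp :=
  match a with
  | Fin s => Fin (nnmul r s)
  | Inf => if Req_EM_T (nnval r) 0 then Fin nn0 else Inf
  end.

Definition ele (a b : ERp) : Prop :=
  match a, b with
  | Fin r, Fin s => nnval r <= nnval s
  | _, Inf => True
  | Inf, Fin _ => False
  end.

Definition elt (a b : ERp) : Prop :=
  match a, b with
  | Fin r, Fin s => nnval r < nnval s
  | Fin _, Inf => True
  | Inf, _ => False
  end.

(** s is the supremum (least upper bound) of S in [0,+oo];
    in particular the supremum of the empty set is 0. *)
Definition is_sup (S : ERp -> Prop) (s : ERp) : Prop :=
  (forall t, S t -> ele t s) /\ (forall u, (forall t, S t -> ele t u) -> ele s u).

Definition upper_open (V : ERp -> Prop) : Prop :=
  (forall t, ~ V t) \/ (forall t, V t) \/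
  exists r : NNR, forall t, V t <-> elt (Fin r) t.

Inductive generated_open {X : Type} (S : (X -> Prop) -> Prop) : (X -> Prop) -> Prop :=
| go_sub U : S U -> generated_open S U
| go_full : generated_open S (fun _ => True)
| go_inter U V : generated_open S U -> generated_open S V ->
    generated_open S (fun x => U x /\ V x)
| go_union (G : (X -> Prop) -> Prop) :
    (forall U, G U -> generated_open S U) ->
    generated_open S (fun x => exists U, G U /\ U x)
| go_ext U V : generated_open S U -> (forall x, U x <-> V x) -> generated_open S V.

(** Lower semicontinuity = continuity into [0,+oo] with the upper topology. *)
Definition lsc {X : Type} (open : (X -> Prop) -> Prop) (f : X -> ERp) : Prop :=
  forall V, upper_open V -> open (fun x => V (f x)).

(** Weak upper topology w(D,C): the coarsest topology on D making every
    y |-> <x,y> (x in C) lower semicontinuous, i.e. the topology generated by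
    the preimages of upper-open sets under these maps. *)
Definition weak_upper_open {C D : Type} (pair : C -> D -> ERp) : (D -> Prop) -> Prop :=
  generated_open (fun W => exists (x : C) (V : ERp -> Prop),
                     upper_open V /\ W = (fun y => V (pair x y))).

Definition is_cone {C : Type} (zero : C) (add : C -> C -> C) (smul : NNR -> C -> C) : Prop :=
  (forall x y z, add x (add y z) = add (add x y) z) /\
  (forall x y, add x y = add y x) /\
  (forall x, add zero x = x) /\
  (forall r x y, smul r (add x y) = add (smul r x) (smul r y)) /\
  (forall r s x, smul (nnadd r s) x = add (smul r x) (smul s x)) /\
  (forall r s x, smul (nnmul r s) x = smul r (smul s x)) /\
  (forall x, smul nn1 x = x) /\
  (forall x, smul nn0 x = zero).

Definition bilinear {C D : Type} (addC : C -> C -> C) (smulC : NNR -> C -> C)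
    (addD : D -> D -> D) (smulD : NNR -> D -> D) (pair : C -> D -> ERp) : Prop :=
  (forall x x' y, pair (addC x x') y = eadd (pair x y) (pair x' y)) /\
  (forall r x y, pair (smulC r x) y = escale r (pair x y)) /\
  (forall x y y', pair x (addD y y') = eadd (pair x y) (pair x y')) /\
  (forall r x y, pair x (smulD r y) = escale r (pair x y)).

Definition nonsingular {C D : Type} (pair : C -> D -> ERp) : Prop :=
  forall y y' : D, y <> y' -> exists x : C, pair x y <> pair x y'.

Definition sublinear {D : Type} (addD : D -> D -> D) (smulD : NNR -> D -> D)
    (psi : D -> ERp) : Prop :=
  (forall r y, psi (smulD r y) = escale r (psi y)) /\
  (forall y z, ele (psi (addD y z)) (eadd (psi y) (psi z))).

From Stdlib Require Import Reals Lra Psatz Classical List.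
Open Scope R_scope.

(* Let r < psi y.  Lower semicontinuity of psi gives theta > r and finitely
   many x_0, ..., x_n in C with theta < <x_i, y> such that theta < <x_i, z>
   for all i forces theta < psi z.  The vectors w in R^(n+1) for which some z
   satisfies psi z <= q and w_i + q <= <x_i, z> form a convex cone missing
   the open positive orthant, so by Gordan's alternative a probability vector
   lam annihilates it from above.  Then x = sum_i lam_i x_i is dominated by
   psi and <x, y> >= theta > r. *)

Fixpoint rsum (f : nat -> R) (k : nat) : R :=
  match k with O => 0 | S k => rsum f k + f k end.

Lemma rsum_ext f g k : (forall i, (i < k)%nat -> f i = g i) -> rsum f k = rsum g k.
Proof.
  induction k as [|k IH]; intros Hfg; simpl; [reflexivity|].
  rewrite (IH (fun i Hi => Hfg i ltac:(lia))), Hfg by lia; reflexivity.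
Qed.

Lemma rsum_plus f g k : rsum (fun i => f i + g i) k = rsum f k + rsum g k.
Proof. induction k as [|k IH]; simpl; [ring|rewrite IH; ring]. Qed.

Lemma rsum_scal c f k : rsum (fun i => c * f i) k = c * rsum f k.
Proof. induction k as [|k IH]; simpl; [ring|rewrite IH; ring]. Qed.

Definition convex_cone (K : (nat -> R) -> Prop) : Prop :=
  (forall w w', K w -> K w' -> K (fun i => w i + w' i)) /\
  (forall c w, 0 < c -> K w -> K (fun i => c * w i)).

(* Two points of P on either side of the open quadrant have nonpositive
   cross product, otherwise (b1 - a1) (a0,b0) + (a0 - b0) (a1,b1) = (d,d)
   with d = a0 b1 - a1 b0 would lie in the quadrant.  The separating
   direction is then the supremum of the slopes coming from the points
   with b > 0. *)
Lemma plane_separation (P : R -> R -> Prop) :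
  (forall a b a' b' c d, P a b -> P a' b' -> 0 < c -> 0 < d ->
     P (c * a + d * a') (c * b + d * b')) ->
  (forall a b, P a b -> a <= 0 \/ b <= 0) ->
  exists t, 0 <= t <= 1 /\ forall a b, P a b -> t * a + (1 - t) * b <= 0.
Proof.
  intros Pcomb Pout.
  assert (Pside_a : forall a b, P a b -> 0 < b -> a <= 0)
    by (intros a b Hab Hb; destruct (Pout a b Hab); lra).
  assert (Pside_b : forall a b, P a b -> 0 < a -> b <= 0)
    by (intros a b Hab Ha; destruct (Pout a b Hab); lra).
  assert (cross : forall a0 b0 a1 b1, P a0 b0 -> P a1 b1 -> 0 < a0 -> 0 < b1 ->
            a0 * b1 <= a1 * b0).
  { intros a0 b0 a1 b1 H0 H1 Ha0 Hb1.
    pose proof (Pside_b _ _ H0 Ha0). pose proof (Pside_a _ _ H1 Hb1).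
    destruct (Pout _ _ (Pcomb _ _ _ _ (b1 - a1) (a0 - b0) H0 H1 ltac:(lra) ltac:(lra)));
      nra. }
  set (U := fun u => u = 0 \/ exists a b, P a b /\ 0 < b /\ u * (b - a) = b).
  assert (U_le_1 : forall u, U u -> u <= 1).
  { intros u [->|[a [b [Hab [Hb Hu]]]]]; [lra|].
    pose proof (Pside_a _ _ Hab Hb). nra. }
  destruct (completeness U (ex_intro _ 1 U_le_1) (ex_intro _ 0 (or_introl eq_refl)))
    as [t [t_ub t_lub]].
  assert (t_ge_0 : 0 <= t) by (apply t_ub; left; reflexivity).
  assert (t_le_1 : t <= 1) by (apply t_lub; exact U_le_1).
  exists t; split; [lra|]. intros a b Hab.
  destruct (Rlt_or_le 0 b) as [Hb|Hb]; [|destruct (Rlt_or_le 0 a) as [Ha|Ha]].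
  - pose proof (Pside_a _ _ Hab Hb).
    assert (Hu : U (b / (b - a))) by (right; exists a, b; repeat split; auto; field; lra).
    pose proof (t_ub _ Hu).
    assert (b / (b - a) * (b - a) = b) by (field; lra). nra.
  - assert (t <= - b / (a - b)).
    { apply t_lub. intros u [->|[a1 [b1 [H1 [Hb1 Hu]]]]].
      - apply Rmult_le_pos; [lra|]. apply Rlt_le, Rinv_0_lt_compat; lra.
      - pose proof (cross _ _ _ _ Hab H1 Ha Hb1). pose proof (Pside_a _ _ H1 Hb1).
        apply Rmult_le_reg_r with (a - b); [lra|].
        replace (- b / (a - b) * (a - b)) with (- b) by (field; lra).
        apply Rmult_le_reg_r with (b1 - a1); [lra|]. nra. }
    assert (- b / (a - b) * (a - b) = - b) by (field; lra). nra.
  - nra.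
Qed.

Definition merge_last (t : R) (n : nat) (w : nat -> R) (i : nat) : R :=
  if Nat.eqb i n then t * w n + (1 - t) * w (S n) else w i.

Definition split_last (t : R) (n : nat) (mu : nat -> R) (i : nat) : R :=
  if Nat.eqb i (S n) then (1 - t) * mu n
  else if Nat.eqb i n then t * mu n else mu i.

Lemma rsum_split_last t n mu w :
  rsum (fun i => split_last t n mu i * w i) (S (S n)) =
  rsum (fun i => mu i * merge_last t n w i) (S n).
Proof.
  cbn [rsum].
  rewrite (rsum_ext _ (fun i => mu i * merge_last t n w i) n).
  - unfold split_last, merge_last. rewrite !Nat.eqb_refl.
    rewrite (proj2 (Nat.eqb_neq n (S n))) by lia. ring.
  - intros i Hi. unfold split_last, merge_last.
    rewrite (proj2 (Nat.eqb_neq i (S n))), (proj2 (Nat.eqb_neq i n)) by lia. reflexivity.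
Qed.

(* Gordan's alternative, by induction on n: separating in the plane of the
   last two coordinates (restricted to the points positive in all others)
   merges them into one. *)
Lemma gordan n K :
  convex_cone K ->
  (forall w, K w -> exists i, (i <= n)%nat /\ w i <= 0) ->
  exists l : nat -> R, (forall i, 0 <= l i) /\ rsum l (S n) = 1 /\
    forall w, K w -> rsum (fun i => l i * w i) (S n) <= 0.
Proof.
  revert K; induction n as [|n IH]; intros K [Kadd Kscal] Kout.
  - exists (fun _ => 1). split; [intros; lra|]. split; [simpl; lra|].
    intros w Hw. destruct (Kout w Hw) as [i [Hi Hwi]].
    replace i with 0%nat in Hwi by lia. simpl; lra.
  - set (P := fun a b => exists w, K w /\ (forall i, (i < n)%nat -> 0 < w i) /\
                                   w n = a /\ w (S n) = b).
    destruct (plane_separation P) as [t [Ht Hsep]].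
    { intros a b a' b' c d [w [Hw [Hpos [<- <-]]]] [w' [Hw' [Hpos' [<- <-]]]] Hc Hd.
      exists (fun i => c * w i + d * w' i). split; [apply Kadd; apply Kscal; auto|].
      split; [|auto]. intros i Hi. specialize (Hpos i Hi). specialize (Hpos' i Hi). nra. }
    { intros a b [w [Hw [Hpos [<- <-]]]]. destruct (Kout w Hw) as [i [Hi Hwi]].
      destruct (Nat.lt_ge_cases i n) as [Hin|Hin]; [specialize (Hpos i Hin); lra|].
      assert (i = n \/ i = S n) as [->| ->] by lia; auto. }
    set (Kt := fun v => exists w, K w /\ forall i, v i = merge_last t n w i).
    destruct (IH Kt) as [mu [Hmu0 [Hmu1 Hmu]]].
    + split.
      * intros v v' [w [Hw Hv]] [w' [Hw' Hv']]. exists (fun i => w i + w' i).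
        split; [now apply Kadd|]. intros i. rewrite Hv, Hv'. unfold merge_last.
        destruct (Nat.eqb i n); ring.
      * intros c v Hc [w [Hw Hv]]. exists (fun i => c * w i).
        split; [now apply Kscal|]. intros i. rewrite Hv. unfold merge_last.
        destruct (Nat.eqb i n); ring.
    + intros v [w [Hw Hv]].
      destruct (classic (exists i, (i < n)%nat /\ w i <= 0)) as [[i [Hi Hwi]]|Hpos].
      * exists i. split; [lia|]. rewrite Hv. unfold merge_last.
        rewrite (proj2 (Nat.eqb_neq i n)) by lia. exact Hwi.
      * exists n. split; [lia|]. rewrite Hv. unfold merge_last. rewrite Nat.eqb_refl.
        apply Hsep. exists w. repeat split; auto. intros i Hi.
        apply Rnot_le_lt. intro Hwi. apply Hpos; eauto.
    + exists (split_last t n mu). split; [|split].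
      * intros i. pose proof (Hmu0 n). unfold split_last.
        destruct (Nat.eqb i (S n)); [nra|]. destruct (Nat.eqb i n); [nra|auto].
      * rewrite <- Hmu1.
        rewrite (rsum_ext _ (fun i => split_last t n mu i * 1)) by (intros; ring).
        rewrite rsum_split_last. apply rsum_ext. intros i _.
        unfold merge_last. destruct (Nat.eqb i n); ring.
      * intros w Hw. rewrite rsum_split_last. apply Hmu. exists w; auto.
Qed.

Definition Rle_ERp (v : R) (e : ERp) : Prop :=
  match e with Fin s => v <= nnval s | Inf => True end.
Definition Rlt_ERp (v : R) (e : ERp) : Prop :=
  match e with Fin s => v < nnval s | Inf => True end.
Definition ERp_le_R (e : ERp) (v : R) : Prop :=
  match e with Fin s => nnval s <= v | Inf => False end.

Definition nnabs (v : R) : NNR := exist _ (Rabs v) (Rabs_pos v).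

Lemma nnval_ge0 (r : NNR) : 0 <= nnval r.
Proof. exact (proj2_sig r). Qed.

Lemma nnabs_val v : 0 <= v -> nnval (nnabs v) = v.
Proof. intros Hv. apply Rabs_right; lra. Qed.

Lemma ERp_le_R_escale0 e : ERp_le_R (escale nn0 e) 0.
Proof.
  destruct e; simpl; [lra|]. destruct (Req_EM_T 0 0) as [_|]; simpl; lra.
Qed.

Lemma Rlt_ERp_weaken v v' e : v <= v' -> Rlt_ERp v' e -> Rlt_ERp v e.
Proof. destruct e; simpl; auto; lra. Qed.

Lemma Rlt_ERp_Rle v e : Rlt_ERp v e -> Rle_ERp v e.
Proof. destruct e; simpl; auto; lra. Qed.

Lemma ERp_le_R_not_Rlt e v : ERp_le_R e v -> ~ Rlt_ERp v e.
Proof. destruct e; simpl; auto; lra. Qed.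

Lemma not_ele_Rlt e p : ~ ele e (Fin p) -> Rlt_ERp (nnval p) e.
Proof. destruct e; simpl; auto; lra. Qed.

Lemma Rlt_ERp_interpolate v e : 0 <= v -> Rlt_ERp v e ->
  exists w, v < w /\ Rlt_ERp w e.
Proof.
  destruct e as [s|]; simpl; intros Hv He.
  - exists ((v + nnval s) / 2); lra.
  - exists (v + 1); split; [lra|exact I].
Qed.

Lemma Rlt_ERp_escale_pos r v e : 0 < nnval r ->
  Rlt_ERp (nnval r * v) (escale r e) <-> Rlt_ERp v e.
Proof.
  intros Hr. destruct e as [s|]; simpl.
  - split; intros H; nra.
  - destruct (Req_EM_T (nnval r) 0); [lra|simpl; tauto].
Qed.

Lemma Rle_ERp_eadd v1 v2 a b :
  Rle_ERp v1 a -> Rle_ERp v2 b -> Rle_ERp (v1 + v2) (eadd a b).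
Proof. destruct a, b; simpl; auto; lra. Qed.

Lemma Rle_ERp_escale r v e : Rle_ERp v e -> Rle_ERp (nnval r * v) (escale r e).
Proof.
  pose proof (nnval_ge0 r) as Hr. destruct e as [s|]; simpl; intros H.
  - apply Rmult_le_compat_l; auto.
  - destruct (Req_EM_T (nnval r) 0) as [E|]; simpl; auto. rewrite E; lra.
Qed.

Lemma Rlt_ERp_eadd v a b : Rlt_ERp v (eadd a b) ->
  exists v1 v2, Rlt_ERp v1 a /\ Rlt_ERp v2 b /\ v = v1 + v2.
Proof.
  destruct a as [s|], b as [s'|]; simpl; intros H.
  - exists (nnval s - (nnval s + nnval s' - v) / 2), (nnval s' - (nnval s + nnval s' - v) / 2).
    repeat split; lra.
  - exists (nnval s - 1), (v - nnval s + 1); repeat split; auto; lra.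
  - exists (v - nnval s' + 1), (nnval s' - 1); repeat split; auto; lra.
  - exists v, 0; repeat split; auto; lra.
Qed.

Lemma Rlt_ERp_escale v r e : Rlt_ERp v (escale r e) ->
  exists u, Rle_ERp u e /\ v < nnval r * u.
Proof.
  destruct e as [s|]; simpl; intros H.
  - exists (nnval s); simpl; split; [lra|exact H].
  - destruct (Req_EM_T (nnval r) 0) as [E|E].
    + exists 0. simpl in H. split; [exact I|]. rewrite Rmult_0_r; exact H.
    + pose proof (nnval_ge0 r). exists ((v + 1) / nnval r). split; [exact I|].
      field_simplify; lra.
Qed.

Lemma Rle_ERp_lt v v' e : v < v' -> Rle_ERp v' e -> Rlt_ERp v e.
Proof. destruct e; simpl; auto; lra. Qed.

Lemma ele_ERp_le_R a b v : ele a b -> ERp_le_R b v -> ERp_le_R a v.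
Proof. destruct a, b; simpl; auto; lra. Qed.

Lemma ERp_le_R_eadd a b v v' :
  ERp_le_R a v -> ERp_le_R b v' -> ERp_le_R (eadd a b) (v + v').
Proof. destruct a, b; simpl; auto; lra. Qed.

Lemma ERp_le_R_escale r e v : ERp_le_R e v -> ERp_le_R (escale r e) (nnval r * v).
Proof.
  pose proof (nnval_ge0 r). destruct e; simpl; [|tauto]. intros. nra.
Qed.

Section LeftLinear.

Variables (C D : Type) (zeroC : C) (addC : C -> C -> C) (smulC : NNR -> C -> C).
Variable pair : C -> D -> ERp.
Hypothesis pair_addl : forall x x' y, pair (addC x x') y = eadd (pair x y) (pair x' y).
Hypothesis pair_scalel : forall r x y, pair (smulC r x) y = escale r (pair x y).

(* Each sub-basic open set {z | r < <x,z>} around y contains one of the form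
   {z | theta < <x',z>}, with x' a positive multiple of x; hence any fixed
   threshold theta > 0 describes a neighbourhood base. *)
Lemma weak_upper_open_nbhd theta U :
  0 < theta -> weak_upper_open pair U -> forall y, U y ->
  exists xs : list C, Forall (fun x => Rlt_ERp theta (pair x y)) xs /\
    forall z, Forall (fun x => Rlt_ERp theta (pair x z)) xs -> U z.
Proof.
  intros Htheta.
  induction 1 as [U [x [V [HV ->]]] | | U V _ IHU _ IHV | G _ IH | U V _ IH HUV];
    intros y Hy.
  - destruct HV as [Vempty|[Vfull|[r Vr]]].
    + exfalso; exact (Vempty _ Hy).
    + exists nil; split; auto.
    + apply Vr in Hy. destruct (Rlt_ERp_interpolate (nnval r) _ (nnval_ge0 r) Hy)
        as [rho [Hr Hrho]].
      assert (Hrho_pos : 0 < rho) by (pose proof (nnval_ge0 r); lra).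
      set (s := nnabs (theta / rho)).
      assert (Hs_val : nnval s = theta / rho)
        by (apply nnabs_val, Rlt_le, Rdiv_lt_0_compat; lra).
      assert (Hs : nnval s * rho = theta) by (rewrite Hs_val; field; lra).
      assert (Hs_pos : 0 < nnval s) by (rewrite Hs_val; apply Rdiv_lt_0_compat; lra).
      exists (smulC s x :: nil). split.
      * constructor; [|constructor]. rewrite pair_scalel, <- Hs.
        now apply Rlt_ERp_escale_pos.
      * intros z Hz. apply Forall_inv in Hz as Hxz. apply Vr.
        rewrite pair_scalel, <- Hs, Rlt_ERp_escale_pos in Hxz by exact Hs_pos.
        apply (Rlt_ERp_weaken _ rho); [lra|exact Hxz].
  - exists nil; split; auto.
  - destruct Hy as [HyU HyV].
    destruct (IHU y HyU) as [l1 [Hl1 HU]], (IHV y HyV) as [l2 [Hl2 HV]].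
    exists (l1 ++ l2). split; [now apply Forall_app|].
    intros z Hz. apply Forall_app in Hz as [Hz1 Hz2]. auto.
  - destruct Hy as [W [HW HWy]]. destruct (IH W HW y HWy) as [l [Hl HWz]].
    exists l; split; [exact Hl|]. intros z Hz; exists W; auto.
  - apply HUV in Hy. destruct (IH y Hy) as [l [Hl HU]].
    exists l; split; [exact Hl|]. intros z Hz; apply HUV; auto.
Qed.

(* The coefficients are read through nnabs, so sum_(i<k) l_i X_i is meant
   only for l_i >= 0. *)
Fixpoint comb (l : nat -> R) (X : nat -> C) (k : nat) : C :=
  match k with
  | O => zeroC
  | S k => addC (comb l X k) (smulC (nnabs (l k)) (X k))
  end.

Lemma pair_comb_lb l X u z k :
  (forall i, (i < k)%nat -> 0 <= l i) ->
  (forall i, (i < k)%nat -> Rle_ERp (u i) (pair (X i) z)) ->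
  Rle_ERp (rsum (fun i => l i * u i) k) (pair (comb l X k) z).
Proof.
  intros Hl Hu. induction k as [|k IH]; simpl.
  - destruct (pair zeroC z) as [s|]; simpl; [apply nnval_ge0|exact I].
  - rewrite pair_addl, pair_scalel. apply Rle_ERp_eadd.
    + apply IH; intros i Hi; [apply Hl|apply Hu]; lia.
    + rewrite <- (nnabs_val (l k)) at 1 by (apply Hl; lia). apply Rle_ERp_escale, Hu; lia.
Qed.

Hypothesis pair_zerol : forall z, ERp_le_R (pair zeroC z) 0.

Lemma pair_comb_approx l X v z k :
  (forall i, (i < k)%nat -> 0 <= l i) ->
  Rlt_ERp v (pair (comb l X k) z) ->
  exists u, (forall i, (i < k)%nat -> Rle_ERp (u i) (pair (X i) z)) /\
    v < rsum (fun i => l i * u i) k.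
Proof.
  revert v. induction k as [|k IH]; simpl; intros v Hl Hv.
  - exists (fun _ => 0). split; [intros; lia|].
    pose proof (pair_zerol z) as H0. destruct (pair zeroC z); simpl in *; lra.
  - rewrite pair_addl, pair_scalel in Hv.
    destruct (Rlt_ERp_eadd _ _ _ Hv) as [v1 [v2 [Hv1 [Hv2 ->]]]].
    destruct (IH v1 (fun i Hi => Hl i ltac:(lia)) Hv1) as [u [Hu Hsum]].
    destruct (Rlt_ERp_escale _ _ _ Hv2) as [uk [Huk Hvk]].
    rewrite nnabs_val in Hvk by (apply Hl; lia).
    exists (fun i => if Nat.eqb i k then uk else u i). split.
    + intros i Hi. destruct (Nat.eqb_spec i k) as [->|]; [exact Huk|apply Hu; lia].
    + rewrite Nat.eqb_refl, (rsum_ext _ (fun i => l i * u i)); [lra|].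
      intros i Hi. rewrite (proj2 (Nat.eqb_neq i k)) by lia. reflexivity.
Qed.

End LeftLinear.

Arguments weak_upper_open_nbhd {C D smulC pair} pair_scalel theta U.
Arguments comb {C} zeroC addC smulC l X k.
Arguments pair_comb_lb {C D zeroC addC smulC pair} pair_addl pair_scalel l X u z k.
Arguments pair_comb_approx {C D zeroC addC smulC pair} pair_addl pair_scalel pair_zerol l X v z k.

Section Domination.

Variables (C D : Type) (zeroC : C) (addC : C -> C -> C) (smulC : NNR -> C -> C).
Variables (addD : D -> D -> D) (smulD : NNR -> D -> D) (pair : C -> D -> ERp).
Hypothesis pair_bilinear : bilinear addC smulC addD smulD pair.
Hypothesis pair_zerol : forall z, ERp_le_R (pair zeroC z) 0.
Variable psi : D -> ERp.
Hypothesis psi_sublinear : sublinear addD smulD psi.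
Variables (n : nat) (X : nat -> C) (theta : R).
Hypothesis theta_pos : 0 < theta.
Hypothesis psi_nbhd : forall z,
  (forall i, (i <= n)%nat -> Rlt_ERp theta (pair (X i) z)) -> Rlt_ERp theta (psi z).

Definition dominated (w : nat -> R) : Prop :=
  exists z q, 0 < q /\ ERp_le_R (psi z) q /\
    forall i, (i <= n)%nat -> Rle_ERp (w i + q) (pair (X i) z).

Lemma dominated_cone : convex_cone dominated.
Proof.
  destruct pair_bilinear as [_ [_ [Paddr Pscaler]]], psi_sublinear as [Psc Padd].
  split.
  - intros w w' [z [q [Hq [Hpz Hw]]]] [z' [q' [Hq' [Hpz' Hw']]]].
    exists (addD z z'), (q + q'). repeat split; [lra| |].
    + eapply ele_ERp_le_R; [apply Padd|]. now apply ERp_le_R_eadd.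
    + intros i Hi. rewrite Paddr.
      replace (w i + w' i + (q + q')) with ((w i + q) + (w' i + q')) by ring.
      apply Rle_ERp_eadd; auto.
  - intros c w Hc [z [q [Hq [Hpz Hw]]]].
    set (s := nnabs c).
    assert (Hs_val : nnval s = c) by (apply nnabs_val; lra).
    exists (smulD s z), (c * q). repeat split; [nra| |].
    + rewrite Psc, <- Hs_val. now apply ERp_le_R_escale.
    + intros i Hi. rewrite Pscaler.
      replace (c * w i + c * q) with (nnval s * (w i + q)) by (rewrite Hs_val; ring).
      apply Rle_ERp_escale; auto.
Qed.

(* A strictly positive w would, after rescaling z by theta/q, put z in the
   neighbourhood on which theta < psi, contradicting psi z <= q. *)
Lemma dominated_not_positive w :
  dominated w -> exists i, (i <= n)%nat /\ w i <= 0.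
Proof.
  destruct pair_bilinear as [_ [_ [_ Pscaler]]], psi_sublinear as [Psc _].
  intros [z [q [Hq [Hpz Hw]]]]. apply NNPP; intros Hpos.
  set (s := nnabs (theta / q)).
  assert (Hs_val : nnval s = theta / q)
    by (apply nnabs_val, Rlt_le, Rdiv_lt_0_compat; lra).
  assert (Hs : nnval s * q = theta) by (rewrite Hs_val; field; lra).
  assert (Hs_pos : 0 < nnval s) by (rewrite Hs_val; apply Rdiv_lt_0_compat; lra).
  assert (Hpsi : Rlt_ERp theta (psi (smulD s z))).
  { apply psi_nbhd. intros i Hi. rewrite Pscaler, <- Hs, Rlt_ERp_escale_pos by exact Hs_pos.
    apply (Rle_ERp_lt _ (w i + q)); [|now apply Hw].
    destruct (Rle_or_lt (w i) 0); [exfalso; eauto|lra]. }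
  rewrite Psc, <- Hs, Rlt_ERp_escale_pos in Hpsi by exact Hs_pos.
  exact (ERp_le_R_not_Rlt _ _ Hpz Hpsi).
Qed.

Lemma dominating_functional : exists x : C,
  (forall z, ele (pair x z) (psi z)) /\
  forall y, (forall i, (i <= n)%nat -> Rlt_ERp theta (pair (X i) y)) ->
    Rle_ERp theta (pair x y).
Proof.
  destruct pair_bilinear as [Paddl [Pscalel _]].
  destruct (gordan n dominated dominated_cone dominated_not_positive)
    as [lam [Hlam0 [Hlam1 Hlam]]].
  exists (comb zeroC addC smulC lam X (S n)). split.
  - intros z. destruct (psi z) as [p|] eqn:Ep; [|destruct (pair _ z); exact I].
    apply NNPP; intros Hgt. apply not_ele_Rlt in Hgt.
    destruct (pair_comb_approx Paddl Pscalel pair_zerol lam X _ z (S n)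
                (fun i _ => Hlam0 i) Hgt) as [u [Hu Hsum]].
    set (q := (nnval p + rsum (fun i => lam i * u i) (S n)) / 2).
    assert (Hdom : dominated (fun i => u i + (- q))).
    { pose proof (nnval_ge0 p). exists z, q. repeat split.
      - unfold q; lra.
      - rewrite Ep; simpl; unfold q; lra.
      - intros i Hi. replace (u i + - q + q) with (u i) by ring. apply Hu; lia. }
    specialize (Hlam _ Hdom).
    rewrite (rsum_ext _ (fun i => lam i * u i + (- q) * lam i)),
      rsum_plus, rsum_scal, Hlam1 in Hlam by (intros; ring).
    unfold q in Hlam; lra.
  - intros y Hy.
    replace theta with (rsum (fun i => lam i * theta) (S n))
      by (rewrite (rsum_ext _ (fun i => theta * lam i)), rsum_scal, Hlam1 by (intros; ring);
          ring).
    apply (pair_comb_lb Paddl Pscalel); auto.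
    intros i Hi. apply Rlt_ERp_Rle, Hy; lia.
Qed.

End Domination.

Arguments dominating_functional {C D zeroC addC smulC addD smulD pair} pair_bilinear
  pair_zerol {psi} psi_sublinear n X theta theta_pos psi_nbhd.

Lemma lsc_superlevel_open {X : Type} (open : (X -> Prop) -> Prop) (f : X -> ERp) theta :
  lsc open f -> 0 <= theta -> open (fun x => Rlt_ERp theta (f x)).
Proof.
  intros Hf Htheta. apply (Hf (fun t => Rlt_ERp theta t)).
  right; right. exists (nnabs theta). intros t.
  change (elt (Fin (nnabs theta)) t) with (Rlt_ERp (nnval (nnabs theta)) t).
  rewrite nnabs_val by exact Htheta. tauto.
Qed.

Lemma separating_functional {C D : Type} {zeroC : C} {addC : C -> C -> C}
  {smulC : NNR -> C -> C} {addD : D -> D -> D} {smulD : NNR -> D -> D}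
  {pair : C -> D -> ERp} {psi : D -> ERp} {y : D} {r : R} :
  is_cone zeroC addC smulC ->
  bilinear addC smulC addD smulD pair ->
  sublinear addD smulD psi ->
  lsc (weak_upper_open pair) psi ->
  0 <= r -> Rlt_ERp r (psi y) ->
  exists x : C, (forall z, ele (pair x z) (psi z)) /\ Rlt_ERp r (pair x y).
Proof.
  intros HC HB Hpsi Hlsc Hr Hry.
  pose proof HB as [Paddl [Pscalel _]]. pose proof Hpsi as [Psc _].
  assert (Hzero : forall z, ERp_le_R (pair zeroC z) 0).
  { destruct HC as [_ [_ [_ [_ [_ [_ [_ Hsmul0]]]]]]].
    intros z. rewrite <- (Hsmul0 zeroC), Pscalel. apply ERp_le_R_escale0. }
  destruct (Rlt_ERp_interpolate _ _ Hr Hry) as [theta [Hrtheta Htheta]].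
  destruct (weak_upper_open_nbhd Pscalel theta _ ltac:(lra)
              (lsc_superlevel_open _ _ theta Hlsc ltac:(lra)) y Htheta)
    as [[|x0 xs] [Hxs_y Hxs]].
  - exfalso. specialize (Hxs (smulD nn0 y) (Forall_nil _)). rewrite Psc in Hxs.
    exact (ERp_le_R_not_Rlt _ _ (ERp_le_R_escale0 _) (Rlt_ERp_weaken 0 theta _ ltac:(lra) Hxs)).
  - set (X := fun i => nth i (x0 :: xs) x0).
    destruct (dominating_functional HB Hzero Hpsi (length xs) X theta ltac:(lra))
      as [x [Hdom Hxy]].
    + intros z Hz. apply Hxs, Forall_nth. intros i d Hi.
      rewrite nth_indep with (d' := x0) by exact Hi. apply Hz. simpl in Hi; lia.
    + exists x. split; [exact Hdom|]. apply (Rle_ERp_lt _ theta); [exact Hrtheta|].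
      apply Hxy. intros i Hi. apply (proj1 (Forall_nth _ _) Hxs_y). simpl; lia.
Qed.

Theorem theorem4p3
  (C D : Type) (zeroC : C) (addC : C -> C -> C) (smulC : NNR -> C -> C)
  (zeroD : D) (addD : D -> D -> D) (smulD : NNR -> D -> D)
  (pair : C -> D -> ERp) :
  is_cone zeroC addC smulC ->
  is_cone zeroD addD smulD ->
  bilinear addC smulC addD smulD pair ->
  nonsingular pair ->
  forall psi : D -> ERp,
    sublinear addD smulD psi ->
    lsc (weak_upper_open pair) psi ->
    forall y : D,
      is_sup (fun t => exists x : C,
                 (forall z : D, ele (pair x z) (psi z)) /\ t = pair x y)
             (psi y).
Proof.
  intros HC _ HB _ psi Hpsi Hlsc y. split.
  - intros t [x [Hx ->]]. apply Hx.
  - intros [u|] Hu; [|destruct (psi y); exact I].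
    apply NNPP; intros Hgt. apply not_ele_Rlt in Hgt.
    destruct (separating_functional HC HB Hpsi Hlsc (nnval_ge0 u) Hgt) as [x [Hx Hxy]].
    specialize (Hu (pair x y) (ex_intro _ x (conj Hx eq_refl))).
    exact (ERp_le_R_not_Rlt _ _ Hu Hxy).
Qed.
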